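(* Let $A$ be a partially ordered set and let $G,H$ be passable games over $A$. Then: (a) $G\le_{c,1} H$ if and only if $G\le H$; (b) $G\le_{c,2} H$ if and only if $G\le H$; (c) $G\le_{c,3} H$ if and only if $G\lhd H$.
   Context: Games over a poset $A$ are defined inductively: for each $a\in A$ there is an atomic game $[a]$, which has no options; and if $L$ and $R$ are non-empty sets of games, then $\{L\mid R\}$ is a composite game with left options $L$ and right options $R$. The relations $\le$ and $\lhd$ are defined by simultaneous recursion: $G\le H$ iff (1) every left option $G^L$ of $G$ satisfies $G^L\lhd H$, (2) every right option $H^R$ of $H$ satisfies $G\lhd H^R$, and (3) if $G$ or $H$ is atomic then $G\lhd H$; and $G\lhd H$ iff (1) some right option $G^R$ of $G$ satisfies $G^R\le H$, or (2) some left option $H^L$ of $H$ satisfies $G\le H^L$, or (3) $G=[a]$, $H=[b]$ are atomic and $a\le b$. A game is passable if $G\lhd G$ and recursively all its options are passable. Sum: for $G$ over $A$ and $K$ over $B$, $G+K$ is the game over $A\times B$ (componentwise order) with $[a]+[b]=[(a,b)]$ and otherwise $G+K=\{G^L+K,G+K^L\mid G^R+K,G+K^R\}$. Map: for a monotone $f:C\to D$ and a game $X$ over $C$, $f(X)$ is the game over $D$ with $f([c])=[f(c)]$ and $f(\{X^L\mid X^R\})=\{f(X^L)\mid f(X^R)\}$; write $G+_fK=f(G+K)$. Let $\mathbb{B}=\{\bot<\top\}$. For a game $X$ over $\mathbb{B}$ (play: players alternate moving to an option of the current position, Left choosing left options and Right right options, until an atomic position is reached; Left wins iff it is $[\top]$),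 Left has a first-player winning strategy in $X$ iff $X=[\top]$, or $X$ is composite and some left option of $X$ is one in which Left has a second-player winning strategy; Left has a second-player winning strategy in $X$ iff $X=[\top]$, or $X$ is composite and Left has a first-player winning strategy in every right option of $X$. A context for $A$ is a triple $(B,f,K)$ with $B$ a poset, $f:A\times B\to\mathbb{B}$ monotone, and $K$ a passable game over $B$. For passable $G,H$ over $A$: $G\le_{c,1}H$ if for all contexts $(B,f,K)$, if Left has a first-player winning strategy in $G+_fK$ then Left has one in $H+_fK$; $G\le_{c,2}H$ if for all contexts, if Left has a second-player winning strategy in $G+_fK$ then Left has one in $H+_fK$; $G\le_{c,3}H$ if for all contexts, if Left has a second-player winning strategy in $G+_fK$ then Left has a first-player winning strategy in $H+_fK$. *)

Set Implicit Arguments.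

Record poset := Poset {
  carrier :> Type;
  ple : carrier -> carrier -> Prop;
  ple_refl : forall x, ple x x;
  ple_antisym : forall x y, ple x y -> ple y x -> x = y;
  ple_trans : forall x y z, ple x y -> ple y z -> ple x z }.

Definition monotone (P Q : poset) (f : P -> Q) : Prop :=
  forall x y, ple P x y -> ple Q (f x) (f y).
Arguments monotone {P Q} f.

Definition prod_le (A B : poset) (x y : A * B) : Prop :=
  ple A (fst x) (fst y) /\ ple B (snd x) (snd y).

Lemma prod_le_refl (A B : poset) x : prod_le A B x x.
Proof. split; apply ple_refl. Qed.
Lemma prod_le_antisym (A B : poset) x y :
  prod_le A B x y -> prod_le A B y x -> x = y.
Proof.
  destruct x, y; intros [H1 H2] [H3 H4]; simpl in *.
  f_equal; eapply ple_antisym; eauto.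
Qed.
Lemma prod_le_trans (A B : poset) x y z :
  prod_le A B x y -> prod_le A B y z -> prod_le A B x z.
Proof. intros [H1 H2] [H3 H4]; split; eapply ple_trans; eauto. Qed.

Definition prodP (A B : poset) : poset :=
  @Poset (A * B) (prod_le A B) (@prod_le_refl A B)
    (@prod_le_antisym A B) (@prod_le_trans A B).

(** The two-element poset B = {bot < top}, with bot = false, top = true. *)
Definition bool_le (x y : bool) : Prop := x = false \/ y = true.
Lemma bool_le_refl x : bool_le x x.
Proof. destruct x; [right|left]; reflexivity. Qed.
Lemma bool_le_antisym x y : bool_le x y -> bool_le y x -> x = y.
Proof. unfold bool_le; destruct x, y; intuition congruence. Qed.
Lemma bool_le_trans x y z : bool_le x y -> bool_le y z -> bool_le x z.
Proof. unfold bool_le; destruct x, y, z; intuition congruence. Qed.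
Definition boolP : poset :=
  @Poset bool bool_le bool_le_refl bool_le_antisym bool_le_trans.

(** Games over (the carrier of) a poset: an atom [a], or a composite game
    {L | R} whose non-empty sets of left/right options are given as
    families indexed by (inhabited) types. *)
Inductive game (A : Type) : Type :=
| Atom : A -> game A
| Comp : forall (Ix Jx : Type), inhabited Ix -> inhabited Jx ->
         (Ix -> game A) -> (Jx -> game A) -> game A.
Arguments Atom {A} _.
Arguments Comp {A} Ix Jx _ _ _ _.

Definition is_atom {A : Type} (G : game A) : Prop :=
  match G with Atom _ => True | Comp _ _ _ _ _ _ => False end.

Fixpoint game_rel {A : poset} (G : game A) : game A -> Prop * Prop :=
  fix relH (H : game A) : Prop * Prop :=
    let lf :=
      (match G with
       | Comp _ Jx _ _ _ r => exists j : Jx, fst (game_rel (r j) H)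
       | Atom _ => False end)
      \/ (match H with
          | Comp Ix _ _ _ l _ => exists i : Ix, fst (relH (l i))
          | Atom _ => False end)
      \/ (match G, H with
          | Atom a, Atom b => ple A a b
          | _, _ => False end) in
    let le :=
      (match G with
       | Comp Ix _ _ _ l _ => forall i : Ix, snd (game_rel (l i) H)
       | Atom _ => True end)
      /\ (match H with
          | Comp _ Jx _ _ _ r => forall j : Jx, snd (relH (r j))
          | Atom _ => True end)
      /\ ((is_atom G \/ is_atom H) -> lf) in
    (le, lf).

Definition game_le {A : poset} (G H : game A) : Prop := fst (game_rel G H).
Definition game_lf {A : poset} (G H : game A) : Prop := snd (game_rel G H).

Fixpoint passable {A : poset} (G : game A) : Prop :=
  game_lf G G /\
  match G with
  | Atom _ => True
  | Comp Ix Jx _ _ l r => (forall i : Ix, passable (l i)) /\ (forall j : Jx, passable (r j))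
  end.

Definition inh_inl {Ix Ix' : Type} (h : inhabited Ix) : inhabited (Ix + Ix') :=
  match h with inhabits i => inhabits (inl i) end.

Fixpoint gsum {A B : Type} (G : game A) : game B -> game (A * B) :=
  fix gsumK (K : game B) : game (A * B) :=
    match G, K with
    | Atom a, Atom b => Atom (a, b)
    | Atom _, Comp Ix Jx hI hJ l r =>
        Comp Ix Jx hI hJ (fun i => gsumK (l i)) (fun j => gsumK (r j))
    | Comp Ix Jx hI hJ l r, Atom _ =>
        Comp Ix Jx hI hJ (fun i => gsum (l i) K) (fun j => gsum (r j) K)
    | Comp Ix Jx hI hJ l r, Comp Ix' Jx' _ _ l' r' =>
        Comp (Ix + Ix') (Jx + Jx') (inh_inl hI) (inh_inl hJ)
          (fun s => match s with inl i => gsum (l i) K | inr i' => gsumK (l' i') end)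
          (fun s => match s with inl j => gsum (r j) K | inr j' => gsumK (r' j') end)
    end.

Fixpoint gmap {C D : Type} (f : C -> D) (X : game C) : game D :=
  match X with
  | Atom c => Atom (f c)
  | Comp Ix Jx hI hJ l r => Comp Ix Jx hI hJ (fun i => gmap f (l i)) (fun j => gmap f (r j))
  end.

Fixpoint lwin (X : game bool) : Prop * Prop :=
  match X with
  | Atom b => (b = true, b = true)
  | Comp Ix Jx _ _ l r =>
      ((exists i : Ix, snd (lwin (l i))), (forall j : Jx, fst (lwin (r j))))
  end.

Definition left_wins_first (X : game bool) : Prop := fst (lwin X).
Definition left_wins_second (X : game bool) : Prop := snd (lwin X).

Definition sum_via {A B : poset} (f : prodP A B -> boolP) (G : game A) (K : game B)
  : game bool := gmap f (gsum G K).

Definition le_c1 {A : poset} (G H : game A) : Prop :=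
  forall (B : poset) (f : prodP A B -> boolP) (K : game B),
    monotone f -> passable K ->
    left_wins_first (sum_via f G K) -> left_wins_first (sum_via f H K).

Definition le_c2 {A : poset} (G H : game A) : Prop :=
  forall (B : poset) (f : prodP A B -> boolP) (K : game B),
    monotone f -> passable K ->
    left_wins_second (sum_via f G K) -> left_wins_second (sum_via f H K).

Definition le_c3 {A : poset} (G H : game A) : Prop :=
  forall (B : poset) (f : prodP A B -> boolP) (K : game B),
    monotone f -> passable K ->
    left_wins_second (sum_via f G K) -> left_wins_first (sum_via f H K).

From Stdlib Require Import Setoid ClassicalEpsilon.

(* Sums with a passable game and images under monotone maps preserve both
   [<=] and [<|].  For games over {bot < top}, [X <= Y] transfers each kind
   of win for Left from X to Y, while [X <| Y] turns a second-player win in X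
   into a first-player win in Y; this gives the "if" directions.  Conversely,
   let -G be the negative of G over the dual of A with a new bottom, and score
   an atom (a, -b) as top iff b <= a.  Left wins G - G moving second by
   copying moves, and by induction Left wins H - G moving second (resp.
   first) only if G <= H (resp. G <| H).  For [<=_{c,1}] the context
   {-G | bottom} is used: moving first, Left wins G + {-G | bottom} by going
   to G - G, and in H + {-G | bottom} any move of Left inside H is answered
   by Right moving to the bottom atom, where Left cannot win. *)

Canonical prodP.
Canonical boolP.

Section Options.
Context {T : Type}.
Implicit Types G X : game T.

Definition left_option X G : Prop :=
  match G with Atom _ => False | Comp _ _ _ _ l _ => exists i, X = l i end.
Definition right_option X G : Prop :=
  match G with Atom _ => False | Comp _ _ _ _ _ r => exists j, X = r j end.
Definition option_of X G : Prop := left_option X G \/ right_option X G.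

Lemma option_of_wf : well_founded option_of.
Proof.
  intro G; induction G as [a|Ix Jx hI hJ l IHl r IHr]; constructor;
    intros X [[]|[]]; subst; auto.
Qed.

End Options.

Section Order.
Context {A : poset}.
Implicit Types G H K X Y : game A.

Lemma game_le_unfold G H : game_le G H <->
  (match G with Comp _ _ _ _ l _ => forall i, game_lf (l i) H | Atom _ => True end) /\
  (match H with Comp _ _ _ _ _ r => forall j, game_lf G (r j) | Atom _ => True end) /\
  (is_atom G \/ is_atom H -> game_lf G H).
Proof. destruct G, H; exact (iff_refl _). Qed.

Lemma game_lf_unfold G H : game_lf G H <->
  (match G with Comp _ _ _ _ _ r => exists j, game_le (r j) H | Atom _ => False end) \/
  (match H with Comp _ _ _ _ l _ => exists i, game_le G (l i) | Atom _ => False end) \/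
  (match G, H with Atom a, Atom b => ple A a b | _, _ => False end).
Proof. destruct G, H; exact (iff_refl _). Qed.

Lemma game_le_iff G H :
  game_le G H <-> (forall X, left_option X G -> game_lf X H) /\
                  (forall Y, right_option Y H -> game_lf G Y) /\
                  (is_atom G \/ is_atom H -> game_lf G H).
Proof.
  rewrite game_le_unfold; destruct G, H; cbn;
    split; intros (h1 & h2 & h3); repeat split; trivial;
    intros; repeat match goal with e : exists _, _ = _ |- _ => destruct e as [? ->] end;
    eauto; contradiction.
Qed.

Lemma game_lf_iff G H :
  game_lf G H <-> (exists X, right_option X G /\ game_le X H) \/
                  (exists Y, left_option Y H /\ game_le G Y) \/
                  (exists a b, G = Atom a /\ H = Atom b /\ ple A a b).
Proof.
  rewrite game_lf_unfold; destruct G, H; cbn; firstorder (subst; eauto; try congruence).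
Qed.

Lemma lf_intro_right {G H X} : right_option X G -> game_le X H -> game_lf G H.
Proof. intros; apply game_lf_iff; left; eauto. Qed.

Lemma lf_intro_left {G H Y} : left_option Y H -> game_le G Y -> game_lf G H.
Proof. intros; apply game_lf_iff; right; left; eauto. Qed.

Lemma lf_atom {a b : A} : ple A a b -> game_lf (Atom a) (Atom b).
Proof. intros; apply game_lf_iff; right; right; eauto. Qed.

Lemma le_left_lf {G H X} : game_le G H -> left_option X G -> game_lf X H.
Proof. intros h; apply game_le_iff in h; apply h. Qed.

Lemma le_right_lf {G H Y} : game_le G H -> right_option Y H -> game_lf G Y.
Proof. intros h; apply game_le_iff in h; apply h. Qed.

Lemma le_atomic_lf {G H} : game_le G H -> is_atom G \/ is_atom H -> game_lf G H.
Proof. intros h; apply game_le_iff in h; apply h. Qed.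

Lemma le_atom {a b : A} : ple A a b -> game_le (Atom a) (Atom b).
Proof. intros; apply game_le_iff; cbn; intuition auto using lf_atom. Qed.

Lemma game_le_refl G : game_le G G.
Proof.
  induction (option_of_wf G) as [G _ IH].
  apply game_le_iff; repeat split.
  - intros X HX; apply (lf_intro_left HX), IH; left; exact HX.
  - intros Y HY; apply (lf_intro_right HY), IH; right; exact HY.
  - destruct G; intros [[]|[]]; apply lf_atom, ple_refl.
Qed.

Lemma game_trans G H K :
  (game_le G H -> game_le H K -> game_le G K) /\
  (game_lf G H -> game_le H K -> game_lf G K) /\
  (game_le G H -> game_lf H K -> game_lf G K).
Proof.
  revert H K; induction (option_of_wf G) as [G _ IHG]; intros H;
    induction (option_of_wf H) as [H _ IHH]; intros K;
    induction (option_of_wf K) as [K _ IHK].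
  assert (lf_le : game_lf G H -> game_le H K -> game_lf G K).
  { intros h1 h2.
    apply game_lf_iff in h1 as [(X & HX & hX)|[(Y & HY & hY)|(a & b & -> & -> & hab)]].
    - exact (lf_intro_right HX (proj1 (IHG X (or_intror HX) H K) hX h2)).
    - exact (proj2 (proj2 (IHH Y (or_introl HY) K)) hY (le_left_lf h2 HY)).
    - pose proof (le_atomic_lf h2 (or_introl I)) as h3.
      apply game_lf_iff in h3 as [(? & [] & _)|[(Y & HY & hY)|(b' & c & [= <-] & -> & hbc)]].
      + exact (lf_intro_left HY (proj1 (IHK Y (or_introl HY)) (le_atom hab) hY)).
      + apply lf_atom; exact (ple_trans _ _ _ _ hab hbc). }
  assert (le_lf : game_le G H -> game_lf H K -> game_lf G K).
  { intros h1 h2.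
    apply game_lf_iff in h2 as [(X & HX & hX)|[(Y & HY & hY)|(b & c & -> & -> & hbc)]].
    - exact (proj1 (proj2 (IHH X (or_intror HX) K)) (le_right_lf h1 HX) hX).
    - exact (lf_intro_left HY (proj1 (IHK Y (or_introl HY)) h1 hY)).
    - pose proof (le_atomic_lf h1 (or_intror I)) as h3.
      apply game_lf_iff in h3 as [(X & HX & hX)|[(? & [] & _)|(a & b' & -> & [= <-] & hab)]].
      + exact (lf_intro_right HX (proj1 (IHG X (or_intror HX) (Atom b) (Atom c)) hX (le_atom hbc))).
      + apply lf_atom; exact (ple_trans _ _ _ _ hab hbc). }
  repeat split; try assumption.
  intros h1 h2; apply game_le_iff; repeat split.
  - intros X HX; exact (proj1 (proj2 (IHG X (or_introl HX) H K)) (le_left_lf h1 HX) h2).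
  - intros Y HY; exact (proj2 (proj2 (IHK Y (or_intror HY))) h1 (le_right_lf h2 HY)).
  - intros [h|h]; [apply lf_le | apply le_lf]; auto using le_atomic_lf.
Qed.

Lemma game_lf_le_trans {G H K} : game_lf G H -> game_le H K -> game_lf G K.
Proof. apply game_trans. Qed.

Lemma passable_iff G :
  passable G <-> game_lf G G /\ (forall X, option_of X G -> passable X).
Proof.
  destruct G; cbn; unfold option_of; cbn; firstorder (subst; eauto).
Qed.

Lemma passable_lf {G} : passable G -> game_lf G G.
Proof. intros h; apply passable_iff in h; apply h. Qed.

Lemma passable_option {G X} : passable G -> option_of X G -> passable X.
Proof. intros h; apply passable_iff in h; apply h. Qed.

End Order.

Section Sum.
Context {A B : Type}.
Implicit Types (G X : game A) (K Y : game B).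

Lemma gsum_left_option Z G K :
  left_option Z (gsum G K) <->
  (exists X, left_option X G /\ Z = gsum X K) \/ (exists Y, left_option Y K /\ Z = gsum G Y).
Proof.
  destruct G as [a|Ix Jx hI hJ l r], K as [b|Ix' Jx' hI' hJ' l' r']; cbn;
    split; try solve [firstorder (subst; eauto)].
  - intros [[i|i] ->]; [left|right]; eexists; (split; [exists i|]); reflexivity.
  - intros [(? & [i ->] & ->)|(? & [i ->] & ->)]; [exists (inl i)|exists (inr i)]; reflexivity.
Qed.

Lemma gsum_right_option Z G K :
  right_option Z (gsum G K) <->
  (exists X, right_option X G /\ Z = gsum X K) \/ (exists Y, right_option Y K /\ Z = gsum G Y).
Proof.
  destruct G as [a|Ix Jx hI hJ l r], K as [b|Ix' Jx' hI' hJ' l' r']; cbn;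
    split; try solve [firstorder (subst; eauto)].
  - intros [[j|j] ->]; [left|right]; eexists; (split; [exists j|]); reflexivity.
  - intros [(? & [j ->] & ->)|(? & [j ->] & ->)]; [exists (inl j)|exists (inr j)]; reflexivity.
Qed.

Lemma left_option_gsum_l {G X} K : left_option X G -> left_option (gsum X K) (gsum G K).
Proof. intros; apply gsum_left_option; eauto. Qed.

Lemma left_option_gsum_r G {K Y} : left_option Y K -> left_option (gsum G Y) (gsum G K).
Proof. intros; apply gsum_left_option; eauto. Qed.

Lemma right_option_gsum_l {G X} K : right_option X G -> right_option (gsum X K) (gsum G K).
Proof. intros; apply gsum_right_option; eauto. Qed.

Lemma right_option_gsum_r G {K Y} : right_option Y K -> right_option (gsum G Y) (gsum G K).
Proof. intros; apply gsum_right_option; eauto. Qed.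

Lemma gsum_option Z G K :
  option_of Z (gsum G K) ->
  (exists X, option_of X G /\ Z = gsum X K) \/ (exists Y, option_of Y K /\ Z = gsum G Y).
Proof. unfold option_of; rewrite gsum_left_option, gsum_right_option; firstorder. Qed.

Lemma gsum_is_atom G K : is_atom (gsum G K) -> is_atom G /\ is_atom K.
Proof. destruct G, K; cbn; tauto. Qed.

End Sum.

Section SumOrder.
Context {A B : poset}.
Implicit Types (G H X : game A) (K L Y : game B).

Lemma gsum_mono G H K L : passable G -> passable K ->
  (game_le G H -> game_le K L -> game_le (gsum G K) (gsum H L)) /\
  (game_lf G H -> game_le K L -> game_lf (gsum G K) (gsum H L)) /\
  (game_le G H -> game_lf K L -> game_lf (gsum G K) (gsum H L)).
Proof.
  revert H K L; induction (option_of_wf G) as [G _ IHG]; intros H;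
    induction (option_of_wf H) as [H _ IHH]; intros K;
    induction (option_of_wf K) as [K _ IHK]; intros L;
    induction (option_of_wf L) as [L _ IHL]; intros pG pK.
  (* In the atomic cases, passability upgrades [G <= H] to [G <| H] (resp. [K <= L]
     to [K <| L]), and on atoms [<=] and [<|] agree. *)
  assert (lf_r : game_le G H -> game_lf K L -> game_lf (gsum G K) (gsum H L)).
  { intros h1 h2.
    apply game_lf_iff in h2 as [(Y & HY & hY)|[(Y & HY & hY)|(c & c' & -> & -> & hc)]].
    - exact (lf_intro_right (right_option_gsum_r G HY)
               (proj1 (IHK Y (or_intror HY) L pG (passable_option pK (or_intror HY))) h1 hY)).
    - exact (lf_intro_left (left_option_gsum_r H HY)
               (proj1 (IHL Y (or_introl HY) pG pK) h1 hY)).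
    - destruct (proj1 (game_lf_iff G H) (game_lf_le_trans (passable_lf pG) h1))
        as [(X & HX & hX)|[(X & HX & hX)|(a & b & -> & -> & ha)]].
      + exact (lf_intro_right (right_option_gsum_l _ HX)
                 (proj1 (IHG X (or_intror HX) H _ _ (passable_option pG (or_intror HX)) pK)
                    hX (le_atom hc))).
      + exact (lf_intro_left (left_option_gsum_l _ HX)
                 (proj1 (IHH X (or_introl HX) _ _ pG pK) hX (le_atom hc))).
      + exact (@lf_atom (prodP A B) (a, c) (b, c') (conj ha hc)). }
  assert (lf_l : game_lf G H -> game_le K L -> game_lf (gsum G K) (gsum H L)).
  { intros h1 h2.
    apply game_lf_iff in h1 as [(X & HX & hX)|[(X & HX & hX)|(a & b & -> & -> & ha)]].
    - exact (lf_intro_right (right_option_gsum_l K HX)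
               (proj1 (IHG X (or_intror HX) H K L (passable_option pG (or_intror HX)) pK) hX h2)).
    - exact (lf_intro_left (left_option_gsum_l L HX)
               (proj1 (IHH X (or_introl HX) K L pG pK) hX h2)).
    - exact (lf_r (le_atom ha) (game_lf_le_trans (passable_lf pK) h2)). }
  repeat split; try assumption.
  intros h1 h2; apply game_le_iff; repeat split.
  - intros Z HZ; apply gsum_left_option in HZ as [(X & HX & ->)|(Y & HY & ->)].
    + exact (proj1 (proj2 (IHG X (or_introl HX) H K L (passable_option pG (or_introl HX)) pK))
               (le_left_lf h1 HX) h2).
    + exact (proj2 (proj2 (IHK Y (or_introl HY) L pG (passable_option pK (or_introl HY))))
               h1 (le_left_lf h2 HY)).
  - intros Z HZ; apply gsum_right_option in HZ as [(X & HX & ->)|(Y & HY & ->)].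
    + exact (proj1 (proj2 (IHH X (or_intror HX) K L pG pK)) (le_right_lf h1 HX) h2).
    + exact (proj2 (proj2 (IHL Y (or_intror HY) pG pK)) h1 (le_right_lf h2 HY)).
  - intros [h|h]; apply gsum_is_atom in h as [hG hK]; apply lf_l; try exact h2.
    + exact (le_atomic_lf h1 (or_introl hG)).
    + exact (le_atomic_lf h1 (or_intror hG)).
Qed.

Lemma gsum_passable G K : passable G -> passable K -> passable (gsum G K).
Proof.
  revert K; induction (option_of_wf G) as [G _ IHG]; intros K;
    induction (option_of_wf K) as [K _ IHK]; intros pG pK.
  apply passable_iff; split.
  - exact (proj1 (proj2 (gsum_mono G G K K pG pK)) (passable_lf pG) (game_le_refl K)).
  - intros Z HZ; apply gsum_option in HZ as [(X & HX & ->)|(Y & HY & ->)].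
    + exact (IHG X HX K (passable_option pG HX) pK).
    + exact (IHK Y HY pG (passable_option pK HY)).
Qed.

End SumOrder.

Section Map.
Context {C D : poset} (f : C -> D).
Implicit Types X Y : game C.

Lemma gmap_left_option Z X :
  left_option Z (gmap f X) <-> exists Y, left_option Y X /\ Z = gmap f Y.
Proof. destruct X; cbn; firstorder (subst; eauto). Qed.

Lemma gmap_right_option Z X :
  right_option Z (gmap f X) <-> exists Y, right_option Y X /\ Z = gmap f Y.
Proof. destruct X; cbn; firstorder (subst; eauto). Qed.

Lemma left_option_gmap {X Y} : left_option Y X -> left_option (gmap f Y) (gmap f X).
Proof. intros h; apply gmap_left_option; eauto. Qed.

Lemma right_option_gmap {X Y} : right_option Y X -> right_option (gmap f Y) (gmap f X).
Proof. intros h; apply gmap_right_option; eauto. Qed.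

Lemma gmap_option Z X : option_of Z (gmap f X) -> exists Y, option_of Y X /\ Z = gmap f Y.
Proof. unfold option_of; rewrite gmap_left_option, gmap_right_option; firstorder. Qed.

Lemma gmap_is_atom X : is_atom (gmap f X) -> is_atom X.
Proof. destruct X; cbn; tauto. Qed.

Hypothesis f_mono : monotone f.

Lemma gmap_mono X Y :
  (game_le X Y -> game_le (gmap f X) (gmap f Y)) /\
  (game_lf X Y -> game_lf (gmap f X) (gmap f Y)).
Proof.
  revert Y; induction (option_of_wf X) as [X _ IHX]; intros Y;
    induction (option_of_wf Y) as [Y _ IHY].
  assert (lf : game_lf X Y -> game_lf (gmap f X) (gmap f Y)).
  { intros h.
    apply game_lf_iff in h as [(X' & HX & hX)|[(Y' & HY & hY)|(a & b & -> & -> & hab)]].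
    - exact (lf_intro_right (right_option_gmap HX) (proj1 (IHX X' (or_intror HX) Y) hX)).
    - exact (lf_intro_left (left_option_gmap HY) (proj1 (IHY Y' (or_introl HY)) hY)).
    - exact (lf_atom (f_mono a b hab)). }
  split; [intros h; apply game_le_iff; repeat split | exact lf].
  - intros Z HZ; apply gmap_left_option in HZ as (X' & HX & ->).
    exact (proj2 (IHX X' (or_introl HX) Y) (le_left_lf h HX)).
  - intros Z HZ; apply gmap_right_option in HZ as (Y' & HY & ->).
    exact (proj2 (IHY Y' (or_intror HY)) (le_right_lf h HY)).
  - intros hat; apply lf, (le_atomic_lf h).
    destruct hat as [hat|hat]; apply gmap_is_atom in hat; tauto.
Qed.

Lemma gmap_passable X : passable X -> passable (gmap f X).
Proof.
  induction (option_of_wf X) as [X _ IH]; intros pX.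
  apply passable_iff; split; [exact (proj2 (gmap_mono X X) (passable_lf pX)) |].
  intros Z HZ; apply gmap_option in HZ as (Y & HY & ->).
  exact (IH Y HY (passable_option pX HY)).
Qed.

End Map.

Section SumVia.
Context {A B : poset} (f : prodP A B -> boolP).
Implicit Types (G H X : game A) (K Y : game B).

Lemma sum_via_left_option Z G K :
  left_option Z (sum_via f G K) ->
  (exists X, left_option X G /\ Z = sum_via f X K) \/
  (exists Y, left_option Y K /\ Z = sum_via f G Y).
Proof.
  intros h; apply gmap_left_option in h as (W & HW & ->).
  apply gsum_left_option in HW as [(X & HX & ->)|(Y & HY & ->)]; eauto.
Qed.

Lemma sum_via_right_option Z G K :
  right_option Z (sum_via f G K) ->
  (exists X, right_option X G /\ Z = sum_via f X K) \/
  (exists Y, right_option Y K /\ Z = sum_via f G Y).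
Proof.
  intros h; apply gmap_right_option in h as (W & HW & ->).
  apply gsum_right_option in HW as [(X & HX & ->)|(Y & HY & ->)]; eauto.
Qed.

Lemma left_option_sum_via_l {G X} K :
  left_option X G -> left_option (sum_via f X K) (sum_via f G K).
Proof. intros h; exact (left_option_gmap f (left_option_gsum_l K h)). Qed.

Lemma left_option_sum_via_r G {K Y} :
  left_option Y K -> left_option (sum_via f G Y) (sum_via f G K).
Proof. intros h; exact (left_option_gmap f (left_option_gsum_r G h)). Qed.

Lemma right_option_sum_via_l {G X} K :
  right_option X G -> right_option (sum_via f X K) (sum_via f G K).
Proof. intros h; exact (right_option_gmap f (right_option_gsum_l K h)). Qed.

Lemma right_option_sum_via_r G {K Y} :
  right_option Y K -> right_option (sum_via f G Y) (sum_via f G K).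
Proof. intros h; exact (right_option_gmap f (right_option_gsum_r G h)). Qed.

Hypothesis f_mono : monotone f.

Lemma sum_via_le G H K : passable G -> passable K ->
  game_le G H -> game_le (sum_via f G K) (sum_via f H K).
Proof.
  intros pG pK h; apply (gmap_mono f f_mono).
  exact (proj1 (gsum_mono G H K K pG pK) h (game_le_refl K)).
Qed.

Lemma sum_via_lf G H K : passable G -> passable K ->
  game_lf G H -> game_lf (sum_via f G K) (sum_via f H K).
Proof.
  intros pG pK h; apply (gmap_mono f f_mono).
  exact (proj1 (proj2 (gsum_mono G H K K pG pK)) h (game_le_refl K)).
Qed.

Lemma sum_via_passable G K : passable G -> passable K -> passable (sum_via f G K).
Proof. intros pG pK; apply (gmap_passable f f_mono), gsum_passable; assumption. Qed.

End SumVia.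

Section Outcome.
Implicit Types X Y : game boolP.

Lemma left_wins_first_left_option {X Y} :
  left_option Y X -> left_wins_second Y -> left_wins_first X.
Proof. destruct X as [b|Ix Jx hI hJ l r]; cbn; [intros []|]; intros [i ->] h; exists i; exact h. Qed.

Lemma left_wins_first_inv X : left_wins_first X ->
  X = Atom true \/ exists Y, left_option Y X /\ left_wins_second Y.
Proof.
  destruct X as [b|Ix Jx hI hJ l r]; cbn; [intros ->; left; reflexivity|].
  intros [i h]; right; exists (l i); split; [exists i; reflexivity | exact h].
Qed.

Lemma left_wins_second_right_option {X Y} :
  left_wins_second X -> right_option Y X -> left_wins_first Y.
Proof. destruct X as [b|Ix Jx hI hJ l r]; cbn; [intros _ []|]; intros h [j ->]; apply h. Qed.

Lemma left_wins_second_intro X : ~ is_atom X ->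
  (forall Y, right_option Y X -> left_wins_first Y) -> left_wins_second X.
Proof.
  destruct X; cbn; [tauto|]; intros _ h j; apply h; exists j; reflexivity.
Qed.

Lemma left_wins_mono X Y :
  (game_le X Y -> (left_wins_second X -> left_wins_second Y) /\
                  (left_wins_first X -> left_wins_first Y)) /\
  (game_lf X Y -> left_wins_second X -> left_wins_first Y).
Proof.
  revert Y; induction (option_of_wf X) as [X _ IHX]; intros Y;
    induction (option_of_wf Y) as [Y _ IHY].
  assert (lf : game_lf X Y -> left_wins_second X -> left_wins_first Y).
  { intros h hs.
    apply game_lf_iff in h as [(X' & HX & hX)|[(Y' & HY & hY)|(a & b & -> & -> & hab)]].
    - exact (proj2 (proj1 (IHX X' (or_intror HX) Y) hX) (left_wins_second_right_option hs HX)).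
    - exact (left_wins_first_left_option HY (proj1 (proj1 (IHY Y' (or_introl HY)) hY) hs)).
    - destruct hab as [-> | ->]; [discriminate hs | reflexivity]. }
  split; [intros h; split | exact lf].
  - intros hs; destruct Y as [b|Ix Jx hI hJ l r].
    + exact (lf (le_atomic_lf h (or_intror I)) hs).
    + apply left_wins_second_intro; [cbn; tauto|]; intros Y' HY'.
      exact (proj2 (IHY Y' (or_intror HY')) (le_right_lf h HY') hs).
  - intros hf; apply left_wins_first_inv in hf as [->|(X' & HX & hs)].
    + exact (lf (le_atomic_lf h (or_introl I)) eq_refl).
    + exact (proj2 (IHX X' (or_introl HX) Y) (le_left_lf h HX) hs).
Qed.

Lemma passable_left_wins_second_first X :
  passable X -> left_wins_second X -> left_wins_first X.
Proof. intros pX; exact (proj2 (left_wins_mono X X) (passable_lf pX)). Qed.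

End Outcome.

Definition neg_le (A : poset) (x y : option A) : Prop :=
  match x, y with
  | None, _ => True
  | Some _, None => False
  | Some a, Some b => ple A b a
  end.

Lemma neg_le_refl A x : neg_le A x x.
Proof. destruct x; cbn; auto using ple_refl. Qed.

Lemma neg_le_antisym A x y : neg_le A x y -> neg_le A y x -> x = y.
Proof. destruct x, y; cbn; try tauto; intros; f_equal; apply ple_antisym; assumption. Qed.

Lemma neg_le_trans A x y z : neg_le A x y -> neg_le A y z -> neg_le A x z.
Proof. destruct x, y, z; cbn; try tauto; intros; eapply ple_trans; eassumption. Qed.

Definition negP (A : poset) : poset :=
  @Poset (option A) (neg_le A) (@neg_le_refl A) (@neg_le_antisym A) (@neg_le_trans A).
Canonical negP.

Fixpoint neg {A : Type} (G : game A) : game (option A) :=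
  match G with
  | Atom a => Atom (Some a)
  | Comp Ix Jx hI hJ l r => Comp Jx Ix hJ hI (fun j => neg (r j)) (fun i => neg (l i))
  end.

Section Negation.
Context {A : poset}.
Implicit Types X Y : game A.

Lemma neg_left_option Z X :
  left_option Z (neg X) <-> exists Y, right_option Y X /\ Z = neg Y.
Proof. destruct X; cbn; firstorder (subst; eauto). Qed.

Lemma neg_right_option Z X :
  right_option Z (neg X) <-> exists Y, left_option Y X /\ Z = neg Y.
Proof. destruct X; cbn; firstorder (subst; eauto). Qed.

Lemma left_option_neg {X Y} : right_option Y X -> left_option (neg Y) (neg X).
Proof. intros h; apply neg_left_option; eauto. Qed.

Lemma right_option_neg {X Y} : left_option Y X -> right_option (neg Y) (neg X).
Proof. intros h; apply neg_right_option; eauto. Qed.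

Lemma neg_option Z X : option_of Z (neg X) -> exists Y, option_of Y X /\ Z = neg Y.
Proof. unfold option_of; rewrite neg_left_option, neg_right_option; firstorder. Qed.

Lemma neg_is_atom X : is_atom (neg X) -> is_atom X.
Proof. destruct X; cbn; tauto. Qed.

Lemma neg_anti X Y :
  (game_le X Y -> game_le (neg Y) (neg X)) /\
  (game_lf X Y -> game_lf (neg Y) (neg X)).
Proof.
  revert Y; induction (option_of_wf X) as [X _ IHX]; intros Y;
    induction (option_of_wf Y) as [Y _ IHY].
  assert (lf : game_lf X Y -> game_lf (neg Y) (neg X)).
  { intros h.
    apply game_lf_iff in h as [(X' & HX & hX)|[(Y' & HY & hY)|(a & b & -> & -> & hab)]].
    - exact (lf_intro_left (left_option_neg HX) (proj1 (IHX X' (or_intror HX) Y) hX)).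
    - exact (lf_intro_right (right_option_neg HY) (proj1 (IHY Y' (or_introl HY)) hY)).
    - exact (@lf_atom (negP A) (Some b) (Some a) hab). }
  split; [intros h; apply game_le_iff; repeat split | exact lf].
  - intros Z HZ; apply neg_left_option in HZ as (Y' & HY & ->).
    exact (proj2 (IHY Y' (or_intror HY)) (le_right_lf h HY)).
  - intros Z HZ; apply neg_right_option in HZ as (X' & HX & ->).
    exact (proj2 (IHX X' (or_introl HX) Y) (le_left_lf h HX)).
  - intros hat; apply lf, (le_atomic_lf h).
    destruct hat as [hat|hat]; apply neg_is_atom in hat; tauto.
Qed.

Lemma neg_passable X : passable X -> passable (neg X).
Proof.
  induction (option_of_wf X) as [X _ IH]; intros pX.
  apply passable_iff; split; [exact (proj2 (neg_anti X X) (passable_lf pX)) |].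
  intros Z HZ; apply neg_option in HZ as (Y & HY & ->).
  exact (IH Y HY (passable_option pX HY)).
Qed.

Lemma bot_le_lf (Y : game (negP A)) : game_le (Atom None) Y /\ game_lf (Atom None) Y.
Proof.
  induction (option_of_wf Y) as [Y _ IH].
  assert (lf : game_lf (Atom None) Y).
  { destruct Y as [y|Ix Jx [i] hJ l r]; [exact (@lf_atom (negP A) None y I)|].
    apply (lf_intro_left (Y := l i)); [exists i; reflexivity|].
    apply IH; left; exists i; reflexivity. }
  split; [apply game_le_iff; repeat split | exact lf].
  - intros X [].
  - intros Y' HY'; apply IH; right; exact HY'.
  - intros _; exact lf.
Qed.

End Negation.

Section Distinguishing.
Context {A : poset}.
Implicit Types G H X : game A.

Definition diff_outcome (p : prodP A (negP A)) : boolP :=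
  match snd p with
  | None => false
  | Some b => if excluded_middle_informative (ple A b (fst p)) then true else false
  end.

Lemma diff_outcome_mono : monotone diff_outcome.
Proof.
  intros [a [b|]] [a' [b'|]] [ha hb]; cbn in *; unfold diff_outcome, bool_le; cbn;
    try tauto.
  destruct (excluded_middle_informative (ple A b a)) as [hba|]; [right|left; reflexivity].
  destruct (excluded_middle_informative (ple A b' a')) as [|hn]; [reflexivity|].
  exfalso; apply hn, (ple_trans _ _ _ _ hb), (ple_trans _ _ _ _ hba ha).
Qed.

Local Notation diff H K := (sum_via diff_outcome H K).

Lemma left_wins_second_diff_self X : left_wins_second (diff X (neg X)).
Proof.
  induction (option_of_wf X) as [X _ IH]; destruct X as [a|Ix Jx hI hJ l r].
  - unfold left_wins_second, sum_via, diff_outcome; cbn.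
    destruct (excluded_middle_informative (ple A a a)) as [|hn]; [reflexivity|].
    exfalso; exact (hn (ple_refl _ a)).
  - apply left_wins_second_intro; [cbn; tauto|].
    intros Z HZ; apply sum_via_right_option in HZ as [(X & HX & ->)|(Y & HY & ->)].
    + apply (left_wins_first_left_option (Y := diff X (neg X))).
      * exact (left_option_sum_via_r _ _ (left_option_neg HX)).
      * apply IH; right; exact HX.
    + apply neg_right_option in HY as (X & HX & ->).
      apply (left_wins_first_left_option (Y := diff X (neg X))).
      * apply left_option_sum_via_l; exact HX.
      * apply IH; left; exact HX.
Qed.

Lemma diff_bot_loses X :
  ~ left_wins_first (diff X (Atom None)) /\ ~ left_wins_second (diff X (Atom None)).
Proof.
  induction (option_of_wf X) as [X _ IH]; destruct X as [a|Ix Jx hI [j] l r].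
  - unfold left_wins_first, left_wins_second, sum_via, diff_outcome; cbn.
    split; discriminate.
  - split.
    + intros h; apply left_wins_first_inv in h as [E|(Z & HZ & hs)]; [discriminate|].
      apply sum_via_left_option in HZ as [(Y & HY & ->)|(? & [] & _)].
      exact (proj2 (IH Y (or_introl HY)) hs).
    + intros h; apply (proj1 (IH (r j) (or_intror (ex_intro _ j eq_refl)))).
      apply (left_wins_second_right_option h), right_option_sum_via_l.
      exists j; reflexivity.
Qed.

Lemma diff_reflects G H : passable G -> passable H ->
  (left_wins_second (diff H (neg G)) -> game_le G H) /\
  (left_wins_first (diff H (neg G)) -> game_lf G H).
Proof.
  revert H; induction (option_of_wf G) as [G _ IHG]; intros H;
    induction (option_of_wf H) as [H _ IHH]; intros pG pH.
  assert (lf : left_wins_first (diff H (neg G)) -> game_lf G H).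
  { intros h; apply left_wins_first_inv in h as [E|(Z & HZ & hs)].
    - destruct G as [a|], H as [b|]; unfold sum_via in E; cbn in E; try discriminate.
      injection E as E; unfold diff_outcome in E; cbn in E.
      destruct (excluded_middle_informative (ple A a b)) as [hab|]; [exact (lf_atom hab)|discriminate].
    - apply sum_via_left_option in HZ as [(Y & HY & ->)|(K & HK & ->)].
      + apply (lf_intro_left HY).
        exact (proj1 (IHH Y (or_introl HY) pG (passable_option pH (or_introl HY))) hs).
      + apply neg_left_option in HK as (X & HX & ->).
        apply (lf_intro_right HX).
        exact (proj1 (IHG X (or_intror HX) H (passable_option pG (or_intror HX)) pH) hs). }
  split; [intros h; apply game_le_iff; repeat split | exact lf].
  - intros X HX; apply (proj2 (IHG X (or_introl HX) H (passable_option pG (or_introl HX)) pH)).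
    exact (left_wins_second_right_option h (right_option_sum_via_r _ _ (right_option_neg HX))).
  - intros Y HY; apply (proj2 (IHH Y (or_intror HY) pG (passable_option pH (or_intror HY)))).
    exact (left_wins_second_right_option h (right_option_sum_via_l _ _ HY)).
  - intros _; apply lf, passable_left_wins_second_first; [|exact h].
    apply sum_via_passable; [exact diff_outcome_mono | exact pH | exact (neg_passable G pG)].
Qed.

Definition le_probe G : game (negP A) :=
  Comp unit unit (inhabits tt) (inhabits tt) (fun _ => neg G) (fun _ => Atom None).

Lemma le_probe_passable G : passable G -> passable (le_probe G).
Proof.
  intros pG; apply passable_iff; split.
  - apply (lf_intro_right (X := Atom None)); [exists tt; reflexivity | apply bot_le_lf].
  - intros X [[[] ->]|[[] ->]]; [exact (neg_passable G pG)|].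
    apply passable_iff; split; [apply bot_le_lf | intros ? [[]|[]]].
Qed.

Lemma left_wins_first_probe_self G : left_wins_first (diff G (le_probe G)).
Proof.
  apply (left_wins_first_left_option (Y := diff G (neg G))).
  - apply left_option_sum_via_r; exists tt; reflexivity.
  - apply left_wins_second_diff_self.
Qed.

Lemma probe_reflects_le G H : passable G -> passable H ->
  left_wins_first (diff H (le_probe G)) -> game_le G H.
Proof.
  intros pG pH h; apply left_wins_first_inv in h as [E|(Z & HZ & hs)].
  - destruct H; discriminate E.
  - apply sum_via_left_option in HZ as [(Y & HY & ->)|(K & [[] ->] & ->)].
    + exfalso; apply (proj1 (diff_bot_loses Y)).
      apply (left_wins_second_right_option hs), right_option_sum_via_r.
      exists tt; reflexivity.
    + exact (proj1 (diff_reflects G H pG pH) hs).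
Qed.

End Distinguishing.

Theorem proposition9p3 (A : poset) (G H : game A) :
  passable G -> passable H ->
  (le_c1 G H <-> game_le G H) /\
  (le_c2 G H <-> game_le G H) /\
  (le_c3 G H <-> game_lf G H).
Proof.
  intros pG pH; split; [|split]; split.
  - intros hc; apply (probe_reflects_le G H pG pH).
    exact (hc _ _ _ diff_outcome_mono (le_probe_passable G pG) (left_wins_first_probe_self G)).
  - intros hle B f K f_mono pK.
    exact (proj2 (proj1 (left_wins_mono _ _) (sum_via_le f f_mono G H K pG pK hle))).
  - intros hc; apply (proj1 (diff_reflects G H pG pH)).
    exact (hc _ _ _ diff_outcome_mono (neg_passable G pG) (left_wins_second_diff_self G)).
  - intros hle B f K f_mono pK.
    exact (proj1 (proj1 (left_wins_mono _ _) (sum_via_le f f_mono G H K pG pK hle))).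
  - intros hc; apply (proj2 (diff_reflects G H pG pH)).
    exact (hc _ _ _ diff_outcome_mono (neg_passable G pG) (left_wins_second_diff_self G)).
  - intros hlf B f K f_mono pK.
    exact (proj2 (left_wins_mono _ _) (sum_via_lf f f_mono G H K pG pK hlf)).
Qed.
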